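(* Let $0<\varepsilon<\pi/2$ and $0<\eta<\min\{\pi/4,\varepsilon/2\}$. Then there exists a constant $c>0$ such that $$c(|\lambda|^{1/2}+\tilde A)^3\le|\det L|\qquad\text{for all }\lambda\in\Sigma_\varepsilon,\ \xi'\in\tilde\Sigma_\eta^{n-1}.$$
   Context: $\rho_\pm,\mu_\pm>0$ are constants. $\Sigma_\varepsilon=\{\lambda\in\mathbb C\setminus\{0\}:|\arg\lambda|<\pi-\varepsilon\}$, $\tilde\Sigma_\eta=\{z\in\mathbb C\setminus\{0\}:|\arg z|<\eta\}\cup\{z\in\mathbb C\setminus\{0\}:\pi-\eta<|\arg z|\}$, and $\xi'=(\xi_1,\dots,\xi_{n-1})\in\tilde\Sigma_\eta^{n-1}$. Set $A=\sqrt{\sum_{j=1}^{n-1}\xi_j^2}$, $B_\pm=\sqrt{\rho_\pm\mu_\pm^{-1}\lambda+A^2}$ (square roots with positive real part), $\tilde A=\sqrt{\sum_{j=1}^{n-1}|\xi_j|^2}$, and $$L=\begin{bmatrix}\mu_+(B_++A)&\mu_+(B_+^2+A^2)&-\mu_-(B_-+A)&-\mu_-(B_-^2+A^2)\\ \mu_+(B_+-A)&-2\mu_+AB_+&\mu_-(B_--A)&-2\mu_-AB_-\\ 1&B_+&1&B_-\\ 0&1&0&-1\end{bmatrix}.$$ *)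

From HB Require Import structures.
From mathcomp Require Import all_boot all_order all_algebra.
From mathcomp Require Import complex.
From mathcomp Require Import reals trigo.

Set Implicit Arguments.
Unset Strict Implicit.
Unset Printing Implicit Defensive.

Import Order.TTheory GRing.Theory Num.Theory.
Local Open Scope ring_scope.

Section Defs.
Variable R : realType.

Definition cmod (z : R[i]) : R := Num.sqrt (complex.Re z ^+ 2 + complex.Im z ^+ 2).

Definition polar_arg (z : R[i]) (P : R -> Prop) : Prop :=
  exists theta : R, [/\ - pi < theta <= pi,
    z = Complex (cmod z * cos theta) (cmod z * sin theta) & P theta].

Definition Sigma (eps : R) (lam : R[i]) : Prop :=
  lam != 0 /\ polar_arg lam (fun theta => `|theta| < pi - eps).

Definition tSigma (eta : R) (z : R[i]) : Prop :=
  z != 0 /\ polar_arg z (fun theta => `|theta| < eta \/ pi - eta < `|theta|).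

(* principal square root: the square root with nonnegative real part
   (positive real part off the half-line (-oo,0]) *)
Definition csqrt (w : R[i]) : R[i] :=
  Complex (Num.sqrt ((cmod w + complex.Re w) / 2))
          ((if 0 <= complex.Im w then 1 else -1) * Num.sqrt ((cmod w - complex.Re w) / 2)).

Definition Afun (n : nat) (xi : 'I_n -> R[i]) : R[i] :=
  csqrt (\sum_(j < n) xi j ^+ 2).

Definition Bfun (rho mu : R) (lam A : R[i]) : R[i] :=
  csqrt (Complex (rho / mu) 0 * lam + A ^+ 2).

Definition tildeA (n : nat) (xi : 'I_n -> R[i]) : R :=
  Num.sqrt (\sum_(j < n) cmod (xi j) ^+ 2).

Definition mx_of_rows (rows : seq (seq R[i])) : 'M[R[i]]_4 :=
  \matrix_(i < 4, j < 4) nth 0 (nth [::] rows i) j.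

Definition Lmat (rp rm mp mm : R) (n : nat) (lam : R[i]) (xi : 'I_n -> R[i])
  : 'M[R[i]]_4 :=
  let A := Afun xi in
  let Bp := Bfun rp mp lam A in
  let Bm := Bfun rm mm lam A in
  let mup := Complex mp 0 in
  let mum := Complex mm 0 in
  mx_of_rows
    [:: [:: mup * (Bp + A); mup * (Bp ^+ 2 + A ^+ 2);
            - (mum * (Bm + A)); - (mum * (Bm ^+ 2 + A ^+ 2))];
        [:: mup * (Bp - A); - (2 * mup * A * Bp);
            mum * (Bm - A); - (2 * mum * A * Bm)];
        [:: 1; Bp; 1; Bm];
        [:: 0; 1; 0; -1] ].

End Defs.

From HB Require Import structures.
From mathcomp Require Import all_boot all_order all_algebra.
From mathcomp Require Import complex.
From mathcomp Require Import reals trigo.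
From mathcomp Require Import ring lra.
Import Order.TTheory GRing.Theory Num.Theory.
Local Open Scope ring_scope.
Local Open Scope complex_scope.

Set Implicit Arguments.
Unset Strict Implicit.
Unset Printing Implicit Defensive.

Local Notation Re := complex.Re.
Local Notation Im := complex.Im.

(* Expanding the determinant gives det L = (rho+ + rho-) lam (X + Y) + 4 A X Y with
   X = mu+ B+ + mu- A and Y = mu- B- + mu+ A.  The angle conditions force A and
   w = sqrt lam into the right half-plane, with an angle between them bounded away
   from pi / 2 uniformly in lam and xi'.  Let g bisect their directions: A, w, B+-,
   X, Y and H = X Y / (X + Y) then all lie in the closed sector around g spanned by A
   and w, while lam, A^2 and A H lie in the doubled sector, a convex cone of opening
   < pi.  In such cones the modulus of a sum is comparable to the sum of the moduli,
   so |det L| = |X + Y| |rho lam + 4 A H| >~ (|X| + |Y|) (|lam| + |A| |H|), and each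
   of |X|, |Y| is >~ (|lam| + |A|^2)^(1/2), which gives the bound. *)

Section ComplexModulus.
Variable R : realType.
Implicit Types (z w : R[i]) (r : R).

Lemma cmodE z : cmod z = Normc.normc z.
Proof. by case: z. Qed.

Lemma cmod_ge0 z : 0 <= cmod z.
Proof. exact: sqrtr_ge0. Qed.

Lemma sqr_cmod z : cmod z ^+ 2 = Re z ^+ 2 + Im z ^+ 2.
Proof. by rewrite sqr_sqrtr // addr_ge0 // sqr_ge0. Qed.

Lemma cmodM z w : cmod (z * w) = cmod z * cmod w.
Proof. by rewrite !cmodE Normc.normcM. Qed.

Lemma ler_cmodD z w : cmod (z + w) <= cmod z + cmod w.
Proof. by rewrite !cmodE le_normcD. Qed.

Lemma cmodV z : cmod z^-1 = (cmod z)^-1.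
Proof. by rewrite !cmodE Normc.normcV. Qed.

Lemma cmod_eq0 z : (cmod z == 0) = (z == 0).
Proof.
apply/eqP/eqP => [|->]; first by rewrite cmodE => /Normc.eq0_normc.
by rewrite cmodE Normc.normc0.
Qed.

Lemma cmod_gt0 z : (0 < cmod z) = (z != 0).
Proof. by rewrite lt_def cmod_eq0 cmod_ge0 andbT. Qed.

Lemma cmodN z : cmod (- z) = cmod z.
Proof. by case: z => a b; rewrite /cmod /= !sqrrN. Qed.

Lemma cmodJ z : cmod (conjc z) = cmod z.
Proof. by case: z => a b; rewrite /cmod /= sqrrN. Qed.

Lemma cmod_real r : cmod r%:C = `|r|.
Proof. by rewrite /cmod /= expr0n addr0 sqrtr_sqr. Qed.

Lemma cmod_realM r z : 0 <= r -> cmod (r%:C * z) = r * cmod z.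
Proof. by move=> r0; rewrite cmodM cmod_real ger0_norm. Qed.

Lemma Re_le_cmod z : Re z <= cmod z.
Proof. by have := sqr_cmod z; have := cmod_ge0 z; have := sqr_ge0 (Im z); nra. Qed.

Lemma Re_ge_Ncmod z : - cmod z <= Re z.
Proof. by have := sqr_cmod z; have := cmod_ge0 z; have := sqr_ge0 (Im z); nra. Qed.

Lemma ReM z w : Re (z * w) = Re z * Re w - Im z * Im w.
Proof. by case: z; case: w. Qed.

Lemma ReJ z : Re (conjc z) = Re z.
Proof. by case: z. Qed.

Lemma ImJ z : Im (conjc z) = - Im z.
Proof. by case: z. Qed.

Lemma Re_realM r z : Re (r%:C * z) = r * Re z.
Proof. by case: z => a b /=; rewrite mul0r subr0. Qed.

Lemma Re_mulJ_le z w : Re (z * conjc w) <= cmod z * cmod w.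
Proof. by rewrite -(cmodJ w) -cmodM Re_le_cmod. Qed.

Lemma mulcJ z : z * conjc z = (cmod z ^+ 2)%:C.
Proof. by rewrite sqr_cmod; case: z => a b; simpc; rewrite /= -!expr2; congr (_ +i* _); ring. Qed.

Lemma ler_cmod_sum m (f : 'I_m -> R[i]) :
  cmod (\sum_(j < m) f j) <= \sum_(j < m) cmod (f j).
Proof.
elim/big_rec2: _ => [|j y z _ IH]; first by rewrite cmod_real normr0.
by apply: le_trans (ler_cmodD _ _) _; rewrite lerD2l.
Qed.

End ComplexModulus.

Section SquareRoot.
Variable R : realType.
Implicit Types w : R[i].

Lemma sqr_csqrt w : csqrt w ^+ 2 = w.
Proof.
case: w => x y; set m := cmod (x +i* y).
have hm : m ^+ 2 = x ^+ 2 + y ^+ 2 by rewrite sqr_cmod.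
have hxm : `|x| <= m.
  have m0 : 0 <= m := cmod_ge0 _.
  by have := sqr_ge0 y; rewrite ler_norml => ?; apply/andP; split; nra.
have [hp hn] : 0 <= (m + x) / 2 /\ 0 <= (m - x) / 2.
  by move: hxm; rewrite ler_norml => /andP[? ?]; split; apply: divr_ge0 => //; lra.
rewrite /csqrt -/m expr2 /=.
set s := (if 0 <= y then 1 else -1).
have hs : s ^+ 2 = 1 by rewrite /s; case: ifP; rewrite ?sqrrN expr1n.
have hsy : s * `|y| = y.
  rewrite /s; case: ifPn => h; first by rewrite ger0_norm ?mul1r.
  by rewrite ltr0_norm ?mulN1r ?opprK // ltNge.
set a := Num.sqrt ((m + x) / 2); set b := Num.sqrt ((m - x) / 2).
have ha : a ^+ 2 = (m + x) / 2 by rewrite sqr_sqrtr.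
have hb : b ^+ 2 = (m - x) / 2 by rewrite sqr_sqrtr.
have hab : a * b = `|y| / 2.
  apply/eqP; rewrite -(eqrXn2 (n := 2)) ?(mulr_ge0, sqrtr_ge0, invr_ge0) //.
  rewrite exprMn ha hb expr_div_n (real_normK (num_real y)).
  by apply/eqP; rewrite (_ : y ^+ 2 = m ^+ 2 - x ^+ 2); [field | rewrite hm; ring].
simpc; congr (_ +i* _).
  have -> : a * a - s * b * (s * b) = a ^+ 2 - s ^+ 2 * b ^+ 2 by ring.
  by rewrite ha hb hs; field.
have -> : a * (s * b) + s * b * a = s * (a * b) * 2 by ring.
by rewrite hab -[in RHS]hsy; field.
Qed.

Lemma Re_csqrt_ge0 w : 0 <= Re (csqrt w).
Proof. exact: sqrtr_ge0. Qed.

Lemma sqr_Re_csqrt w : Re (csqrt w) ^+ 2 = (cmod w + Re w) / 2.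
Proof. by rewrite sqr_sqrtr // divr_ge0 //; have := Re_ge_Ncmod w; lra. Qed.

Lemma sqr_cmod_csqrt w : cmod (csqrt w) ^+ 2 = cmod w.
Proof. by rewrite expr2 -cmodM -expr2 sqr_csqrt. Qed.

End SquareRoot.

Lemma det_mx4 (F : comNzRingType) (f : nat -> nat -> F) :
  let det3 i1 i2 i3 j1 j2 j3 :=
      f i1 j1 * (f i2 j2 * f i3 j3 - f i2 j3 * f i3 j2)
    - f i1 j2 * (f i2 j1 * f i3 j3 - f i2 j3 * f i3 j1)
    + f i1 j3 * (f i2 j1 * f i3 j2 - f i2 j2 * f i3 j1) in
  \det (\matrix_(i < 4, j < 4) f i j) = f 0 0 * det3 1 2 3 1 2 3 - f 0 1 * det3 1 2 3 0 2 3
          + f 0 2 * det3 1 2 3 0 1 3 - f 0 3 * det3 1 2 3 0 1 2.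
Proof.
move=> det3.
rewrite (expand_det_row _ ord0) !big_ord_recl big_ord0 /cofactor.
do 2 rewrite !(expand_det_row _ ord0) !big_ord_recl !big_ord0 /cofactor.
by rewrite !det_mx11 !mxE /bump /= /det3; ring.
Qed.

Lemma det_Lmat (R : realType) (rp rm mp mm : R) (n : nat) (lam : R[i]) (xi : 'I_n -> R[i]) :
  mp != 0 -> mm != 0 ->
  let A := Afun xi in
  let X := mp%:C * Bfun rp mp lam A + mm%:C * A in
  let Y := mm%:C * Bfun rm mm lam A + mp%:C * A in
  \det (Lmat rp rm mp mm lam xi) = (rp + rm)%:C * lam * (X + Y) + 4 * A * X * Y.
Proof.
move=> mp0 mm0 A X Y; rewrite /X /Y.
set Bp := Bfun rp mp lam A; set Bm := Bfun rm mm lam A.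
have eBp : rp%:C * lam = mp%:C * (Bp ^+ 2 - A ^+ 2).
  by rewrite sqr_csqrt addrK mulrA -[_ +i* 0]/((rp / mp)%:C) -rmorphM mulrCA mulfV ?mulr1.
have eBm : rm%:C * lam = mm%:C * (Bm ^+ 2 - A ^+ 2).
  by rewrite sqr_csqrt addrK mulrA -[_ +i* 0]/((rm / mm)%:C) -rmorphM mulrCA mulfV ?mulr1.
rewrite rmorphD mulrDl eBp eBm /Lmat /mx_of_rows (det_mx4 (fun i j => nth 0 (nth [::] _ i) j)) /=.
rewrite -/A -/Bp -/Bm -[mp +i* 0]/(mp%:C) -[mm +i* 0]/(mm%:C).
ring.
Qed.

Section RealBounds.
Variable R : realType.

Lemma sqrtr_le_sqr (t y : R) : 0 <= y -> t <= y ^+ 2 -> Num.sqrt t <= y.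
Proof. by move=> y0 ty; rewrite -(ger0_norm y0) -sqrtr_sqr ler_sqrt ?sqr_ge0. Qed.

Lemma cube_bound (L rA nX nY nD rho al cm : R) :
  0 <= L -> 0 <= rA -> 0 <= rho -> 0 <= al -> 0 <= cm ->
  al * Num.sqrt (L + rA ^+ 2) <= nX -> al * Num.sqrt (L + rA ^+ 2) <= nY ->
  cm * (rho * L * (nX + nY) + 4 * rA * (nX * nY)) <= 2 * nD ->
  cm * Num.min (rho * al) (2 * al ^+ 2) * ((L + rA ^+ 2) * Num.sqrt (L + rA ^+ 2)) <= nD.
Proof.
move=> L0 rA0 rho0 al0 cm0 hX hY hD.
set Q := L + rA ^+ 2 in hX hY *; set sQ := Num.sqrt Q in hX hY *.
have Q0 : 0 <= Q by rewrite addr_ge0 ?sqr_ge0.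
have sQ0 : 0 <= sQ := sqrtr_ge0 Q.
have sQ2 : sQ ^+ 2 = Q by rewrite sqr_sqrtr.
have rAsQ : rA <= sQ by rewrite -(ler_pXn2r (n := 2)) ?nnegrE // sQ2 lerDr.
set m := Num.min _ _.
have m1 : m <= rho * al by rewrite ge_min lexx.
have m2 : m <= 2 * al ^+ 2 by rewrite ge_min lexx orbT.
have m0 : 0 <= m by rewrite le_min !mulr_ge0 ?sqr_ge0.
have asQ0 : 0 <= al * sQ by rewrite mulr_ge0.
have h1 : rho * L * (2 * (al * sQ)) + 4 * rA * (al * sQ * (al * sQ))
          <= rho * L * (nX + nY) + 4 * rA * (nX * nY).
  by apply: lerD; rewrite ler_wpM2l ?mulr_ge0 //; [lra | apply: ler_pM].
have h2 : m * (Q * sQ) * 2 <= rho * L * (2 * (al * sQ)) + 4 * rA * (al * sQ * (al * sQ)).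
  have -> : rho * L * (2 * (al * sQ)) + 4 * rA * (al * sQ * (al * sQ))
     = 2 * sQ * (rho * al * L) + 2 * (2 * al ^+ 2 * (rA * sQ ^+ 2)) by ring.
  have -> : m * (Q * sQ) * 2 = 2 * sQ * (m * L) + 2 * (m * (rA ^+ 2 * sQ)) by rewrite /Q; ring.
  apply: lerD; first by rewrite ler_wpM2l ?mulr_ge0 // ler_wpM2r.
  rewrite ler_wpM2l //; apply: ler_pM; rewrite ?mulr_ge0 ?sqr_ge0 //.
  by rewrite !expr2 -!mulrA ler_wpM2l // ler_wpM2r.
rewrite -(ler_pM2l (ltr0Sn R 1)); apply: le_trans hD.
rewrite (_ : _ * (_ * _ * _) = cm * (m * (Q * sQ) * 2)); last by ring.
by rewrite ler_wpM2l //; apply: le_trans h2 h1.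
Qed.

Lemma sum_cube_le (L T s kA : R) : 0 <= L -> 0 <= T -> 0 < kA -> kA * T ^+ 2 <= s ->
  (Num.sqrt L + T) ^+ 3
    <= 2 * (1 + kA^-1) * Num.sqrt (2 * (1 + kA^-1)) * ((L + s) * Num.sqrt (L + s)).
Proof.
move=> L0 T0 kA0 hT; set beta := 2 * (1 + kA^-1); set P := Num.sqrt L + T.
have ki : 0 < kA^-1 by rewrite invr_gt0.
have s0 : 0 <= s by apply: le_trans hT; rewrite mulr_ge0 ?sqr_ge0 ?ltW.
have be0 : 0 <= beta by rewrite /beta; lra.
have P0 : 0 <= P by rewrite addr_ge0 ?sqrtr_ge0.
have T2 : T ^+ 2 <= kA^-1 * s by rewrite ler_pdivlMl.
have P2 : P ^+ 2 <= beta * (L + s).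
  have := sqr_ge0 (Num.sqrt L - T); have := sqr_sqrtr L0.
  have := mulr_ge0 (ltW ki) L0; rewrite /P /beta; nra.
have Pb : P <= Num.sqrt beta * Num.sqrt (L + s).
  by rewrite -sqrtrM // -(ger0_norm P0) -sqrtr_sqr ler_sqrt // mulr_ge0 // addr_ge0.
rewrite exprSr mulrACA; apply: ler_pM => //; exact: sqr_ge0.
Qed.

Definition det_const (cm u v p q : R) :=
  let al := Num.min u v / 2 * Num.sqrt (cm * Num.min (Num.min p q) 1) in
  cm * Num.min ((u * p + v * q) * al) (2 * al ^+ 2).

Lemma det_const_gt0 (cm u v p q : R) : 0 < cm -> 0 < u -> 0 < v -> 0 < p -> 0 < q ->
  0 < det_const cm u v p q.
Proof.
move=> cm0 u0 v0 p0 q0; rewrite /det_const.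
have al0 : 0 < Num.min u v / 2 * Num.sqrt (cm * Num.min (Num.min p q) 1).
  by rewrite !mulr_gt0 ?sqrtr_gt0 ?mulr_gt0 ?invr_gt0 ?lt_min ?u0 ?v0 ?p0 ?q0 ?ltr01.
rewrite mulr_gt0 // lt_min; apply/andP; split; apply: mulr_gt0 => //.
  by rewrite addr_gt0 ?mulr_gt0.
exact: exprn_gt0.
Qed.

End RealBounds.

Section Sector.
Variable R : realType.
Implicit Types (g z : R[i]) (k r : R).

(* z makes an angle at most arccos (k / |g|) with g. *)
Definition sector g k z := k * cmod z <= Re (z * conjc g).

Lemma sector_le_ReD g k z1 z2 : sector g k z1 -> sector g k z2 ->
  k * (cmod z1 + cmod z2) <= Re ((z1 + z2) * conjc g).
Proof. by rewrite /sector mulrDl raddfD mulrDr; apply: lerD. Qed.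

Lemma sector_le_cmodD g k z1 z2 : sector g k z1 -> sector g k z2 ->
  k * (cmod z1 + cmod z2) <= cmod (z1 + z2) * cmod g.
Proof. by move=> h1 h2; apply: le_trans (sector_le_ReD h1 h2) (Re_mulJ_le _ _). Qed.

Lemma sectorD g k z1 z2 : 0 <= k -> sector g k z1 -> sector g k z2 -> sector g k (z1 + z2).
Proof.
move=> k0 h1 h2; apply: le_trans (sector_le_ReD h1 h2).
by rewrite ler_wpM2l // ler_cmodD.
Qed.

Lemma sectorZ g k r z : 0 <= r -> sector g k z -> sector g k (r%:C * z).
Proof. by move=> r0 h; rewrite /sector cmod_realM // -mulrA Re_realM mulrCA ler_wpM2l. Qed.

Lemma sectorM g k z1 z2 : 0 <= k -> k ^+ 2 <= cmod g ^+ 2 ->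
  sector g k z1 -> sector g k z2 -> sector (g * g) (2 * k ^+ 2 - cmod g ^+ 2) (z1 * z2).
Proof.
rewrite /sector => k0 kg h1 h2.
have -> : z1 * z2 * conjc (g * g) = (z1 * conjc g) * (z2 * conjc g) by rewrite rmorphM; ring.
rewrite ReM cmodM.
have e1 := sqr_cmod (z1 * conjc g); have e2 := sqr_cmod (z2 * conjc g).
rewrite !cmodM cmodJ !exprMn in e1 e2.
move: h1 h2 e1 e2; set x1 := Re _; set x2 := Re _; set y1 := Im _; set y2 := Im _.
have n10 := cmod_ge0 z1; have n20 := cmod_ge0 z2.
set n1 := cmod z1 in n10 *; set n2 := cmod z2 in n20 *; set G := cmod g ^+ 2 in kg *.
move=> h1 h2 e1 e2.
have hx : k ^+ 2 * (n1 * n2) <= x1 * x2.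
  by rewrite expr2 mulrACA; apply: ler_pM => //; apply: mulr_ge0.
have hy1 : y1 ^+ 2 <= (G - k ^+ 2) * n1 ^+ 2.
  by have := mulr_ge0 k0 n10; have := sqr_ge0 n1; nra.
have hy2 : y2 ^+ 2 <= (G - k ^+ 2) * n2 ^+ 2.
  by have := mulr_ge0 k0 n20; have := sqr_ge0 n2; nra.
have hc : 0 <= G - k ^+ 2 by rewrite subr_ge0.
have hyy : y1 * y2 <= (G - k ^+ 2) * (n1 * n2).
  have h0 : 0 <= (G - k ^+ 2) * (n1 * n2) by rewrite !mulr_ge0.
  suff : (y1 * y2) ^+ 2 <= ((G - k ^+ 2) * (n1 * n2)) ^+ 2 by nra.
  rewrite !exprMn.
  have -> : (G - k ^+ 2) ^+ 2 * (n1 ^+ 2 * n2 ^+ 2)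
    = ((G - k ^+ 2) * n1 ^+ 2) * ((G - k ^+ 2) * n2 ^+ 2) by ring.
  by apply: ler_pM => //; exact: sqr_ge0.
nra.
Qed.

Lemma sector_sqrt g k z : 0 <= k -> sector (g * g) (2 * k ^+ 2 - cmod g ^+ 2) (z * z) ->
  k * cmod z <= `|Re (z * conjc g)|.
Proof.
rewrite /sector => k0.
have -> : z * z * conjc (g * g) = (z * conjc g) * (z * conjc g) by rewrite rmorphM; ring.
have e := sqr_cmod (z * conjc g); rewrite cmodM cmodJ exprMn in e.
rewrite ReM cmodM; move: e; set x := Re _; set y := Im _.
have n0 := cmod_ge0 z; move=> e h.
rewrite -(ler_pXn2r (n := 2)) ?nnegrE ?mulr_ge0 // real_normK ?num_real //.
rewrite exprMn; nra.
Qed.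

Lemma sectorV g k z : sector g k z -> sector (conjc g) k z^-1.
Proof.
have [->|z0] := eqVneq z 0; first by rewrite invr0 /sector !mul0r cmod_real normr0 mulr0.
rewrite /sector conjcK cmodV => h.
have cz : 0 < cmod z by rewrite cmod_gt0.
have -> : z^-1 = conjc z * ((cmod z ^+ 2)^-1)%:C.
  by rewrite fmorphV /= -mulcJ invfM mulrCA mulfV ?mulr1 ?conjc_eq0.
rewrite mulrAC [_ * _%:C]mulrC Re_realM.
have -> : Re (conjc z * g) = Re (z * conjc g) by rewrite !ReM !ReJ !ImJ mulrN mulNr.
have -> : k / cmod z = cmod z ^- 2 * (k * cmod z) by field; rewrite gt_eqF.
by rewrite ler_wpM2l // invr_ge0 exprn_ge0 // ltW.
Qed.

Lemma sector_Re_gt0 g k z : 0 < k -> Im g ^+ 2 < k ^+ 2 -> 0 < Re g ->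
  sector g k z -> z != 0 -> 0 < Re z.
Proof.
move=> k0 g2k g1p hz z0; have n0 : 0 < cmod z by rewrite cmod_gt0.
have G0 : 0 < cmod g ^+ 2 by rewrite sqr_cmod; have := sqr_ge0 (Im g); nra.
have eRe : Re z * cmod g ^+ 2 = Re (z * conjc g) * Re g - Im (z * conjc g) * Im g.
  by rewrite -ReM -mulrA [conjc g * g]mulrC mulcJ [z * _]mulrC Re_realM mulrC.
have exy := sqr_cmod (z * conjc g); rewrite cmodM cmodJ exprMn in exy.
move: hz eRe exy; rewrite /sector (sqr_cmod g).
set x := Re (z * _); set y := Im (z * _); set n := cmod z in n0 *.
set g1 := Re g in g1p *; set g2 := Im g in g2k *.
move=> hx eRe exy.
have hx2 : k ^+ 2 * n ^+ 2 <= x ^+ 2 by rewrite -exprMn; have := mulr_gt0 k0 n0; nra.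
have xg1 : 0 < x * g1 by have := mulr_gt0 k0 n0; nra.
have sq : (y * g2) ^+ 2 < (x * g1) ^+ 2.
  rewrite -subr_gt0 (_ : _ - _ = (g1 ^+ 2 + g2 ^+ 2) * (x ^+ 2 - n ^+ 2 * g2 ^+ 2)); last first.
    by rewrite !exprMn (_ : y ^+ 2 = n ^+ 2 * (g1 ^+ 2 + g2 ^+ 2) - x ^+ 2); [ring | lra].
  by apply: mulr_gt0; [have := sqr_ge0 g2 | have := exprn_gt0 2 n0]; nra.
have : 0 < Re z * (g1 ^+ 2 + g2 ^+ 2) by rewrite eRe subr_gt0; nra.
by rewrite pmulr_lgt0 //; have := sqr_ge0 g2; nra.
Qed.

Lemma sector_of_sqr g k z : 0 < k -> Im g ^+ 2 < k ^+ 2 -> 0 < Re g ->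
  0 <= Re z -> z != 0 -> sector (g * g) (2 * k ^+ 2 - cmod g ^+ 2) (z * z) -> sector g k z.
Proof.
move=> k0 g2k g1p Rez z0 /(sector_sqrt (ltW k0)).
have [pos|neg] := lerP 0 (Re (z * conjc g)); first by rewrite ger0_norm.
rewrite ltr0_norm // => hNz.
have : sector g k (- z) by rewrite /sector cmodN mulNr raddfN.
move=> /(sector_Re_gt0 k0 g2k g1p); rewrite oppr_eq0 raddfN /= => /(_ z0).
by rewrite oppr_gt0 ltNge Rez.
Qed.

End Sector.

Section Direction.
Variable R : realType.
Implicit Types z w : R[i].

Definition dir z := ((cmod z)^-1)%:C * z.

Lemma cmod_dir z : z != 0 -> cmod (dir z) = 1.
Proof. by move=> z0; rewrite cmod_realM ?invr_ge0 ?cmod_ge0 // mulVf // cmod_eq0. Qed.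

Lemma dirK z : (cmod z)%:C * dir z = z.
Proof.
have [->|z0] := eqVneq z 0; first by rewrite /dir !mulr0.
by rewrite mulrA -rmorphM mulfV ?mul1r // cmod_eq0.
Qed.

Lemma Re_dir z : Re (dir z) = Re z / cmod z.
Proof. by rewrite Re_realM mulrC. Qed.

Lemma sqr_Re_dir_csqrt k w : w != 0 -> k * cmod w <= Re w ->
  (1 + k) / 2 <= Re (dir (csqrt w)) ^+ 2.
Proof.
move=> w0 hk; have wp : 0 < cmod w by rewrite cmod_gt0.
rewrite Re_dir expr_div_n sqr_Re_csqrt sqr_cmod_csqrt ler_pdivlMr //.
by rewrite mulrAC ler_pM2r //; lra.
Qed.

End Direction.

Section HalfAngles.
Variable R : realType.
Implicit Types (k : R) (w : R[i]).

(* For k1 = cos t1 and k2 = cos t2 with t1, t2 in [0, pi], this is cos ((t1 + t2) / 2). *)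
Definition cos_half_sum (k1 k2 : R) :=
  Num.sqrt ((1 + k1) / 2) * Num.sqrt ((1 + k2) / 2)
  - Num.sqrt ((1 - k1) / 2) * Num.sqrt ((1 - k2) / 2).

Lemma cos_half_sum_gt0 (k1 k2 : R) : -1 <= k1 <= 1 -> -1 <= k2 <= 1 -> 0 < k1 + k2 ->
  0 < cos_half_sum k1 k2.
Proof.
move=> /andP[k10 k11] /andP[k20 k21] k12.
rewrite subr_gt0 -!sqrtrM ?divr_ge0 ?subr_ge0 //; try lra.
by rewrite ltr_sqrt; nra.
Qed.

Lemma cos_half_sum_le (a s : R[i]) (k1 k2 : R) : cmod a = 1 -> cmod s = 1 ->
  0 <= Re a -> 0 <= Re s -> -1 <= k1 -> -1 <= k2 ->
  (1 + k1) / 2 <= Re a ^+ 2 -> (1 + k2) / 2 <= Re s ^+ 2 ->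
  cos_half_sum k1 k2 <= Re (a * conjc s).
Proof.
move=> a1 s1 ra rs k10 k20 hp hq; rewrite ReM ReJ ImJ mulrN opprK.
have ea : Re a ^+ 2 + Im a ^+ 2 = 1 by rewrite -sqr_cmod a1 expr1n.
have es : Re s ^+ 2 + Im s ^+ 2 = 1 by rewrite -sqr_cmod s1 expr1n.
have h1 : Num.sqrt ((1 + k1) / 2) * Num.sqrt ((1 + k2) / 2) <= Re a * Re s.
  by apply: ler_pM; rewrite ?sqrtr_ge0 ?sqrtr_le_sqr.
have h2 : `|Im a * Im s| <= Num.sqrt ((1 - k1) / 2) * Num.sqrt ((1 - k2) / 2).
  have := sqr_ge0 (Im a); have := sqr_ge0 (Im s) => ? ?.
  rewrite normrM; apply: ler_pM; rewrite ?normr_ge0 // -sqrtr_sqr ler_sqrt; lra.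
by move: h2; rewrite ler_norml => /andP[h2 _]; rewrite /cos_half_sum; lra.
Qed.

Lemma csqrt_eq0 w : (csqrt w == 0) = (w == 0).
Proof. by rewrite -cmod_eq0 -sqrf_eq0 sqr_cmod_csqrt cmod_eq0. Qed.

Lemma Re_dir_csqrt_ge0 w : 0 <= Re (dir (csqrt w)).
Proof. by rewrite Re_dir divr_ge0 ?Re_csqrt_ge0 ?cmod_ge0. Qed.

Lemma Re_dir_csqrt_gt0 k w : w != 0 -> -1 < k -> k * cmod w <= Re w ->
  0 < Re (dir (csqrt w)).
Proof.
move=> w0 k1 /(sqr_Re_dir_csqrt w0); have := Re_dir_csqrt_ge0 w; nra.
Qed.

Lemma cos_half_sum_le_dir_csqrt (k1 k2 : R) (w1 w2 : R[i]) : w1 != 0 -> w2 != 0 ->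
  -1 <= k1 -> -1 <= k2 -> k1 * cmod w1 <= Re w1 -> k2 * cmod w2 <= Re w2 ->
  cos_half_sum k1 k2 <= Re (dir (csqrt w1) * conjc (dir (csqrt w2))).
Proof.
move=> w10 w20 k10 k20 h1 h2.
by apply: cos_half_sum_le; rewrite ?cmod_dir ?csqrt_eq0 ?Re_dir_csqrt_ge0 ?sqr_Re_dir_csqrt.
Qed.

End HalfAngles.

Section Angles.
Variable R : realType.
Implicit Types (x y eps eta : R) (z : R[i]).

Lemma cos_piB x : cos (pi - x) = - cos x.
Proof. by rewrite addrC cosDpi cosN. Qed.

Lemma cos_lt_cos x y : 0 <= x -> y <= pi -> x < y -> cos y < cos x.
Proof.
move=> x0 ypi xy; rewrite ltr_cos // in_itv /=.
- by rewrite x0 (ltW (lt_le_trans xy ypi)).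
- by rewrite ypi (ltW (le_lt_trans x0 xy)).
Qed.

Lemma polar_arg_Re z (P : R -> Prop) : polar_arg z P ->
  exists2 t, `|t| <= pi & Re z = cmod z * cos t /\ P t.
Proof.
case=> t [/andP[t1 t2] ez Pt]; exists t; last by rewrite {1}ez.
by rewrite ler_norml t2 andbT ltW.
Qed.

Lemma Sigma_Re eps z : 0 <= eps -> Sigma eps z -> - cos eps * cmod z <= Re z.
Proof.
move=> eps0 [_ /polar_arg_Re[t _ [-> ht]]].
rewrite mulrC ler_wpM2l ?cmod_ge0 // -cos_piB -[cos t]cos_norm.
by apply/ltW/cos_lt_cos; rewrite ?normr_ge0 //; lra.
Qed.

Lemma tSigma_Re eta z : 0 < eta -> eta < pi / 2 -> tSigma eta z ->
  cos eta * cmod z <= `|Re z|.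
Proof.
move=> eta0 etapi [_ /polar_arg_Re[t tpi [-> ht]]].
have pi0 := pi_gt0 R.
rewrite normrM ger0_norm ?cmod_ge0 // mulrC ler_wpM2l ?cmod_ge0 // -[cos t]cos_norm.
case: ht => ht.
  by apply: le_trans (ler_norm _); apply/ltW/cos_lt_cos; rewrite ?normr_ge0 //; lra.
have piBeta : 0 <= pi - eta by lra.
have := cos_lt_cos piBeta tpi ht; rewrite cos_piB => h.
have ce : 0 < cos eta by apply: cos_gt0_pihalf; apply/andP; split; lra.
by rewrite ltr0_norm; lra.
Qed.

Lemma cos_double_gt0 eta : 0 < eta -> eta < pi / 4 -> 0 < cos (eta *+ 2).
Proof.
move=> eta0 eta4; have pi0 := pi_gt0 R.
by apply: cos_gt0_pihalf; rewrite [eta *+ 2]mulr2n; apply/andP; split; lra.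
Qed.

Lemma Re_sqr_ge x z : 0 <= x -> x * cmod z <= `|Re z| ->
  (2 * x ^+ 2 - 1) * cmod z ^+ 2 <= Re (z ^+ 2).
Proof.
move=> x0 h; rewrite expr2 ReM -!expr2.
have h2 : (x * cmod z) ^+ 2 <= Re z ^+ 2.
  by rewrite -[Re z ^+ 2]real_normK ?num_real // ler_pXn2r ?nnegrE ?mulr_ge0 ?cmod_ge0.
by have := sqr_cmod z; rewrite exprMn in h2; nra.
Qed.

Section SumOfSquares.
Variables (m : nat) (xi : 'I_m -> R[i]).

Lemma sqr_tildeA : tildeA xi ^+ 2 = \sum_(j < m) cmod (xi j) ^+ 2.
Proof. by rewrite sqr_sqrtr // sumr_ge0 // => j _; exact: sqr_ge0. Qed.

Lemma cmod_sum_sqr_le : cmod (\sum_(j < m) xi j ^+ 2) <= tildeA xi ^+ 2.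
Proof.
rewrite sqr_tildeA; apply: le_trans (ler_cmod_sum _) _.
by apply: ler_sum => j _; rewrite cmodM.
Qed.

Lemma Re_sum_sqr_ge eta : 0 < eta -> eta < pi / 2 -> (forall j, tSigma eta (xi j)) ->
  cos (eta *+ 2) * tildeA xi ^+ 2 <= Re (\sum_(j < m) xi j ^+ 2).
Proof.
move=> eta0 etapi hxi; rewrite sqr_tildeA raddf_sum mulr_sumr; apply: ler_sum => j _.
have ce : 0 <= cos eta by apply: cos_ge0_pihalf; apply/andP; split; lra.
by rewrite cos_mulr2n -mulr_natl; apply: Re_sqr_ge ce (tSigma_Re eta0 etapi (hxi j)).
Qed.

Lemma tildeA_gt0 eta : (0 < m)%N -> (forall j, tSigma eta (xi j)) -> 0 < tildeA xi.
Proof.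
move=> m0 hxi; have [xi0 _] := hxi (Ordinal m0).
rewrite sqrtr_gt0 (bigD1 (Ordinal m0)) //=.
apply: (@lt_le_trans _ _ (cmod (xi (Ordinal m0)) ^+ 2)); first by rewrite exprn_gt0 // cmod_gt0.
by rewrite lerDl sumr_ge0 // => j _; exact: sqr_ge0.
Qed.

Lemma sum_sqr_bounds eta : 0 < eta -> eta < pi / 4 -> (0 < m)%N ->
  (forall j, tSigma eta (xi j)) ->
  let S := \sum_(j < m) xi j ^+ 2 in
  [/\ S != 0, cos (eta *+ 2) * cmod S <= Re S & cos (eta *+ 2) * tildeA xi ^+ 2 <= cmod S].
Proof.
move=> eta0 eta4 m0 hxi S.
have c0 := cos_double_gt0 eta0 eta4.
have hS : cos (eta *+ 2) * tildeA xi ^+ 2 <= Re S by apply: Re_sum_sqr_ge hxi; lra.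
split; last exact: le_trans hS (Re_le_cmod S).
- have : 0 < Re S := lt_le_trans (mulr_gt0 c0 (exprn_gt0 2 (tildeA_gt0 m0 hxi))) hS.
  by apply: contraTneq => ->; rewrite raddf0 ltxx.
- exact: le_trans (ler_wpM2l (ltW c0) cmod_sum_sqr_le) hS.
Qed.

End SumOfSquares.

Lemma angle_constants eps eta : 0 < eps -> eps < pi / 2 -> 0 < eta ->
  eta < pi / 4 -> eta < eps / 2 ->
  [/\ 0 < cos (eta *+ 2), -1 < cos (eta *+ 2) <= 1, -1 < - cos eps <= 1,
      0 < cos (eta *+ 2) + - cos eps & 0 < cos_half_sum (cos (eta *+ 2)) (- cos eps)].
Proof.
move=> eps0 epspi eta0 eta4 eta2; have pi0 := pi_gt0 R.
have k1_gt0 := cos_double_gt0 eta0 eta4.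
have k1b : -1 < cos (eta *+ 2) <= 1 by rewrite cos_le1 andbT; lra.
have k2b : -1 < - cos eps <= 1.
  have : cos eps < 1 by rewrite -cos0 cos_lt_cos //; lra.
  by have := cos_geN1 eps => ? ?; apply/andP; split; lra.
have k12 : 0 < cos (eta *+ 2) + - cos eps.
  by rewrite subr_gt0; apply: cos_lt_cos; rewrite ?[eta *+ 2]mulr2n; lra.
have k1w : -1 <= cos (eta *+ 2) <= 1 by case/andP: k1b => /ltW -> ->.
have k2w : -1 <= - cos eps <= 1 by case/andP: k2b => /ltW -> ->.
by split=> //; apply: cos_half_sum_gt0.
Qed.

End Angles.

Section Frame.
Variable R : realType.
Variables A w : R[i].
Hypotheses (A0 : A != 0) (w0 : w != 0) (ReA : 0 < Re (dir A)) (Rew : 0 < Re (dir w)).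
Hypothesis c_gt0 : 0 < Re (dir A * conjc (dir w)).

Local Notation a := (dir A).
Local Notation s := (dir w).
Local Notation c := (Re (dir A * conjc (dir w))).
Local Notation g := (dir A + dir w).
(* Since |g|^2 = 2 k, the half-opening arccos (k / |g|) of sector g k is half the angle
   between A and w: this is the sector they span. *)
Local Notation k := (1 + c).
Local Notation sector2 := (sector (g * g) (2 * k ^+ 2 - cmod g ^+ 2)).

Let ea : Re a ^+ 2 + Im a ^+ 2 = 1. Proof. by rewrite -sqr_cmod cmod_dir // expr1n. Qed.
Let es : Re s ^+ 2 + Im s ^+ 2 = 1. Proof. by rewrite -sqr_cmod cmod_dir // expr1n. Qed.

Lemma frame_sqr_cmod : cmod g ^+ 2 = 2 * k.
Proof.
rewrite sqr_cmod; move: ea es.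
by case: (dir A) => x1 y1; case: (dir w) => x2 y2 /=; nra.
Qed.

Lemma frame_c_le1 : c <= 1.
Proof. by have := Re_mulJ_le a s; rewrite !cmod_dir // mulr1. Qed.

Lemma frame_k_sqr : k ^+ 2 <= cmod g ^+ 2.
Proof. by rewrite frame_sqr_cmod expr2 ler_pM2r; have := frame_c_le1; have := c_gt0; lra. Qed.

Lemma frame_cmod_le2 : cmod g <= 2.
Proof.
rewrite -(ler_pXn2r (n := 2)) ?nnegrE ?cmod_ge0 // frame_sqr_cmod.
by have := frame_c_le1; lra.
Qed.

Lemma frame_sector2_coef : 2 * k ^+ 2 - cmod g ^+ 2 = c * cmod g ^+ 2.
Proof. by rewrite frame_sqr_cmod; ring. Qed.

Lemma frame_Re_gt0 : 0 < Re g.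
Proof. by rewrite raddfD /= addr_gt0. Qed.

(* The product of the two positive quantities below is k^2 - (Im g)^2. *)
Lemma frame_Im_lt : Im g ^+ 2 < k ^+ 2.
Proof.
move: ea es ReA Rew; case: (dir A) => x1 y1; case: (dir w) => x2 y2 /= e1 e2 x1p x2p.
have p1 : 0 < (1 - y1) * (1 - y2) + x1 * x2.
  by apply: ltr_pwDr; [apply: mulr_gt0 | apply: mulr_ge0]; nra.
have p2 : 0 < (1 + y1) * (1 + y2) + x1 * x2.
  by apply: ltr_pwDr; [apply: mulr_gt0 | apply: mulr_ge0]; nra.
rewrite -subr_gt0 (_ : _ - _ = ((1 - y1) * (1 - y2) + x1 * x2) * ((1 + y1) * (1 + y2) + x1 * x2)).
  exact: mulr_gt0.
ring.
Qed.

Lemma frame_sector_dir : sector g k a /\ sector g k s.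
Proof.
have Rsa : Re (s * conjc a) = c by case: (dir A) => x1 y1; case: (dir w) => x2 y2 /=; ring.
rewrite /sector !cmod_dir // !mulr1 !rmorphD !mulrDr !raddfD /= !mulcJ !cmod_dir // Rsa.
by rewrite expr1n /= addrC; split.
Qed.

Lemma frame_sectorA : sector g k A.
Proof. by have := sectorZ (cmod_ge0 A) (proj1 frame_sector_dir); rewrite dirK. Qed.

Lemma frame_sectorw : sector g k w.
Proof. by have := sectorZ (cmod_ge0 w) (proj2 frame_sector_dir); rewrite dirK. Qed.

Lemma frame_sector2M z1 z2 : sector g k z1 -> sector g k z2 -> sector2 (z1 * z2).
Proof. by apply: sectorM frame_k_sqr; have := c_gt0; lra. Qed.

Lemma frame_cmodD z1 z2 : sector g k z1 -> sector g k z2 ->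
  cmod z1 + cmod z2 <= 2 * cmod (z1 + z2).
Proof.
move=> h1 h2; apply: le_trans (_ : _ <= k * (cmod z1 + cmod z2)) _.
  by rewrite ler_peMl ?addr_ge0 ?cmod_ge0 //; have := c_gt0; lra.
apply: le_trans (sector_le_cmodD h1 h2) _.
by rewrite [2 * _]mulrC ler_wpM2l ?cmod_ge0 ?frame_cmod_le2.
Qed.

Lemma frame_cmodD2 z1 z2 : sector2 z1 -> sector2 z2 -> c * (cmod z1 + cmod z2) <= cmod (z1 + z2).
Proof.
move=> h1 h2; have := sector_le_cmodD h1 h2.
rewrite frame_sector2_coef cmodM -expr2 mulrAC ler_pM2r // frame_sqr_cmod.
by have := c_gt0; lra.
Qed.

Lemma frame_root B r : 0 < r -> B ^+ 2 = r%:C * (w * w) + A ^+ 2 -> 0 <= Re B ->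
  sector g k B /\ c * (r * cmod (w * w) + cmod A ^+ 2) <= cmod B ^+ 2.
Proof.
move=> r0 eB ReB; rewrite !expr2 in eB *.
have hww := frame_sector2M frame_sectorw frame_sectorw.
have hAA := frame_sector2M frame_sectorA frame_sectorA.
have low : c * (r * cmod (w * w) + cmod A * cmod A) <= cmod B * cmod B.
  have := frame_cmodD2 (sectorZ (ltW r0) hww) hAA.
  by rewrite -eB !cmodM cmod_real (ger0_norm (ltW r0)).
split => //; apply: sector_of_sqr => //.
- by have := c_gt0; lra.
- exact: frame_Im_lt.
- exact: frame_Re_gt0.
- apply/eqP => B0; move: low; rewrite B0 cmod_real normr0 mulr0.
  suff : 0 < c * (r * cmod (w * w) + cmod A * cmod A) by rewrite ltNge => /negbTE ->.
  apply: mulr_gt0 c_gt0 (ltr_wpDl (mulr_ge0 (ltW r0) (cmod_ge0 _)) (mulr_gt0 _ _));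
    by rewrite cmod_gt0.
- rewrite eB; apply: sectorD (sectorZ (ltW r0) hww) hAA.
  by have := frame_sector2_coef; have := c_gt0; nra.
Qed.

Lemma frame_det X Y rho : 0 < rho -> sector g k X -> sector g k Y -> X != 0 -> Y != 0 ->
  c * (rho * cmod (w * w) * (cmod X + cmod Y) + 4 * cmod A * (cmod X * cmod Y))
    <= 2 * cmod (rho%:C * (w * w) * (X + Y) + 4 * A * X * Y).
Proof.
move=> rho0 hX hY X0 Y0.
have hXY := frame_cmodD hX hY.
have XY0 : X + Y != 0.
  by rewrite -cmod_gt0; have := cmod_gt0 X; rewrite X0 => ?; have := cmod_ge0 Y; lra.
set H := X * Y / (X + Y).
have hH : sector g k H.
  have -> : H = (X^-1 + Y^-1)^-1.
    by rewrite (_ : X^-1 + Y^-1 = (X + Y) / (X * Y)) ?invf_div //; field; rewrite X0 Y0.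
  have k0 : 0 <= k by have := c_gt0; lra.
  by have := sectorV (sectorD k0 (sectorV hX) (sectorV hY)); rewrite conjcK.
(* det = (X + Y) Z, and both summands of Z lie in the doubled sector. *)
set Z := rho%:C * (w * w) + (4 : R)%:C * (A * H).
have eD : rho%:C * (w * w) * (X + Y) + 4 * A * X * Y = (X + Y) * Z.
  by rewrite /Z /H rmorph_nat; field; rewrite XY0.
have hZ : c * (rho * cmod (w * w) + 4 * (cmod A * cmod H)) <= cmod Z.
  have := frame_cmodD2 (sectorZ (ltW rho0) (frame_sector2M frame_sectorw frame_sectorw))
                       (sectorZ (ler0n _ 4) (frame_sector2M frame_sectorA hH)).
  by rewrite (cmod_realM _ (ltW rho0)) (cmod_realM _ (ler0n _ 4)) [cmod (A * H)]cmodM.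
have eH : cmod H * cmod (X + Y) = cmod X * cmod Y.
  by rewrite -!cmodM /H divfK.
have hH2 : cmod X * cmod Y <= cmod H * (cmod X + cmod Y).
  by rewrite -eH ler_wpM2l ?cmod_ge0 ?ler_cmodD.
rewrite eD [cmod (_ * Z)]cmodM; set sXY := cmod X + cmod Y in hXY hH2 *.
apply: le_trans (_ : _ <= c * (rho * cmod (w * w) + 4 * (cmod A * cmod H)) * sXY) _.
  rewrite -subr_ge0 (_ : _ - _ = 4 * (c * cmod A * (cmod H * sXY - cmod X * cmod Y))).
    by rewrite !mulr_ge0 ?cmod_ge0 ?subr_ge0 // ltW.
  by rewrite /sXY; ring.
rewrite [2 * _]mulrA [leLHS]mulrC; apply: ler_pM hXY hZ.
  by rewrite addr_ge0 ?cmod_ge0.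
by rewrite mulr_ge0 ?addr_ge0 ?mulr_ge0 ?cmod_ge0 // ltW.
Qed.

Lemma frame_branch_lower B r m cm : 0 < r -> B ^+ 2 = r%:C * (w * w) + A ^+ 2 -> 0 <= Re B ->
  0 <= cm <= c -> 0 <= m <= Num.min r 1 ->
  sector g k B /\ Num.sqrt (cm * m) * Num.sqrt (cmod (w * w) + cmod A ^+ 2) <= cmod B.
Proof.
move=> r0 eB ReB /andP[cm0 cmc] /andP[m0]; rewrite le_min => /andP[mr m1].
have [hB lowB] := frame_root r0 eB ReB; split => //.
rewrite -sqrtrM ?mulr_ge0 // sqrtr_le_sqr ?cmod_ge0 //; apply: le_trans lowB.
rewrite -mulrA; apply: ler_pM; rewrite ?mulr_ge0 ?addr_ge0 ?cmod_ge0 ?sqr_ge0 //.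
by rewrite mulrDr lerD // ?ler_wpM2r ?cmod_ge0 // ler_piMl ?sqr_ge0.
Qed.

Lemma frame_combo_lower B u v r m cm : 0 < u -> 0 < v -> 0 < r ->
  B ^+ 2 = r%:C * (w * w) + A ^+ 2 -> 0 <= Re B -> 0 <= cm <= c -> 0 <= m <= Num.min r 1 ->
  sector g k (u%:C * B + v%:C * A) /\
  Num.min u v / 2 * Num.sqrt (cm * m) * Num.sqrt (cmod (w * w) + cmod A ^+ 2)
    <= cmod (u%:C * B + v%:C * A).
Proof.
move=> u0 v0 r0 eB ReB cm' m'.
have [sB lowB] := frame_branch_lower r0 eB ReB cm' m'.
have [uB vA] := (sectorZ (ltW u0) sB, sectorZ (ltW v0) frame_sectorA).
split; first by apply: sectorD uB vA; have := c_gt0; lra.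
have := frame_cmodD uB vA; rewrite (cmod_realM _ (ltW u0)) (cmod_realM _ (ltW v0)) => hX.
rewrite -mulrA; apply: le_trans (_ : _ <= u / 2 * cmod B) _.
  apply: ler_pM lowB; last by rewrite ler_pM2r ?invr_gt0 // ge_min le_refl.
  - by rewrite divr_ge0 // le_min (ltW u0) (ltW v0).
  - by rewrite mulr_ge0 ?sqrtr_ge0.
rewrite mulrAC ler_pdivrMr // [_ * 2]mulrC.
by have := mulr_ge0 (ltW v0) (cmod_ge0 A); lra.
Qed.

Lemma frame_det_lower lam Bp Bm u v p q cm : w * w = lam ->
  0 < u -> 0 < v -> 0 < p -> 0 < q -> 0 < cm -> cm <= c ->
  Bp ^+ 2 = p%:C * lam + A ^+ 2 -> 0 <= Re Bp ->
  Bm ^+ 2 = q%:C * lam + A ^+ 2 -> 0 <= Re Bm ->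
  det_const cm u v p q * ((cmod lam + cmod A ^+ 2) * Num.sqrt (cmod lam + cmod A ^+ 2))
  <= cmod ((u * p + v * q)%:C * lam * ((u%:C * Bp + v%:C * A) + (v%:C * Bm + u%:C * A))
           + 4 * A * (u%:C * Bp + v%:C * A) * (v%:C * Bm + u%:C * A)).
Proof.
move=> <- u0 v0 p0 q0 cm0 cmc eBp ReBp eBm ReBm.
have cm' : 0 <= cm <= c by rewrite cmc ltW.
set m := Num.min (Num.min p q) 1.
have m0 : 0 < m by rewrite /m !lt_min p0 q0 ltr01.
have mp : 0 <= m <= Num.min p 1 by rewrite ltW //= /m le_min !ge_min !le_refl ?orbT.
have mq : 0 <= m <= Num.min q 1 by rewrite ltW //= /m le_min !ge_min !le_refl ?orbT.
have [sX lowX] := frame_combo_lower u0 v0 p0 eBp ReBp cm' mp.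
have [sY lowY] := frame_combo_lower v0 u0 q0 eBm ReBm cm' mq; rewrite minC in lowY.
set X := u%:C * Bp + v%:C * A in sX lowX *; set Y := v%:C * Bm + u%:C * A in sY lowY *.
set al := Num.min u v / 2 * Num.sqrt (cm * m) in lowX lowY *.
set Q := cmod (w * w) + cmod A ^+ 2 in lowX lowY *.
have Q0 : 0 < Q by rewrite ltr_wpDl ?cmod_ge0 // exprn_gt0 // cmod_gt0.
have al0 : 0 < al by rewrite !mulr_gt0 ?invr_gt0 ?sqrtr_gt0 ?mulr_gt0 // lt_min u0 v0.
have alQ0 : 0 < al * Num.sqrt Q by rewrite mulr_gt0 ?sqrtr_gt0.
have X0 : X != 0 by rewrite -cmod_gt0 (lt_le_trans alQ0 lowX).
have Y0 : Y != 0 by rewrite -cmod_gt0 (lt_le_trans alQ0 lowY).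
have rho0 : 0 < u * p + v * q by rewrite addr_gt0 ?mulr_gt0.
rewrite /det_const -/m -/al; apply: (cube_bound (nX := cmod X) (nY := cmod Y)) => //.
- exact: cmod_ge0.
- exact: cmod_ge0.
- exact: ltW rho0.
- exact: ltW al0.
- exact: ltW cm0.
apply: le_trans (frame_det rho0 sX sY X0 Y0); rewrite ler_wpM2r //.
have [nX nY] := (cmod_ge0 X, cmod_ge0 Y).
apply: addr_ge0; first exact: mulr_ge0 (mulr_ge0 (ltW rho0) (cmod_ge0 _)) (addr_ge0 nX nY).
exact: mulr_ge0 (mulr_ge0 (ler0n R 4) (cmod_ge0 A)) (mulr_ge0 nX nY).
Qed.

End Frame.

Lemma Lmat_det_lower (R : realType) (rp rm mp mm k1 k2 : R) (n : nat)
    (lam : R[i]) (xi : 'I_n -> R[i]) :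
  0 < rp -> 0 < rm -> 0 < mp -> 0 < mm ->
  -1 < k1 <= 1 -> -1 < k2 <= 1 -> 0 < k1 + k2 ->
  let S := \sum_(j < n) xi j ^+ 2 in
  S != 0 -> lam != 0 -> k1 * cmod S <= Re S -> k2 * cmod lam <= Re lam ->
  det_const (cos_half_sum k1 k2) mp mm (rp / mp) (rm / mm)
    * ((cmod lam + cmod S) * Num.sqrt (cmod lam + cmod S))
  <= cmod (\det (Lmat rp rm mp mm lam xi)).
Proof.
move=> rp0 rm0 mp0 mm0 /andP[k1m k1p] /andP[k2m k2p] k12 S S0 lam0 hS hl.
have A0 : Afun xi != 0 by rewrite csqrt_eq0.
have w0 : csqrt lam != 0 by rewrite csqrt_eq0.
have cmc := cos_half_sum_le_dir_csqrt S0 lam0 (ltW k1m) (ltW k2m) hS hl.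
have cm0 : 0 < cos_half_sum k1 k2.
  by apply: cos_half_sum_gt0; rewrite ?k1p ?k2p ?(ltW k1m) ?(ltW k2m).
have elam : csqrt lam * csqrt lam = lam by rewrite -expr2 sqr_csqrt.
rewrite det_Lmat ?gt_eqF // -(sqr_cmod_csqrt S).
have -> : rp + rm = mp * (rp / mp) + mm * (rm / mm).
  by rewrite [mp * _]mulrC [mm * _]mulrC !divfK ?gt_eqF.
exact: (frame_det_lower A0 w0 (Re_dir_csqrt_gt0 S0 k1m hS) (Re_dir_csqrt_gt0 lam0 k2m hl)
  (lt_le_trans cm0 cmc) elam mp0 mm0 (divr_gt0 rp0 mp0) (divr_gt0 rm0 mm0) cm0 cmc
  (sqr_csqrt _) (Re_csqrt_ge0 _) (sqr_csqrt _) (Re_csqrt_ge0 _)).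
Qed.

Unset Implicit Arguments.
Set Strict Implicit.
Local Close Scope complex_scope.

Theorem lemma5p3 (R : realType) (n : nat) (rp rm mp mm eps eta : R) :
  (2 <= n)%N ->
  0 < rp -> 0 < rm -> 0 < mp -> 0 < mm ->
  0 < eps -> eps < pi / 2 ->
  0 < eta -> eta < Num.min (pi / 4) (eps / 2) ->
  exists c : R, 0 < c /\
    forall (lam : R[i]) (xi : 'I_n.-1 -> R[i]),
      Sigma eps lam -> (forall j, tSigma eta (xi j)) ->
      c * (Num.sqrt (cmod lam) + tildeA xi) ^+ 3
        <= cmod (\det (Lmat rp rm mp mm lam xi)).
Proof.
move=> n2 rp0 rm0 mp0 mm0 eps0 epspi eta0; rewrite lt_min => /andP[eta4 eta2].
have [k1_gt0 k1b k2b k12 cm0] := angle_constants eps0 epspi eta0 eta4 eta2.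
set K := det_const (cos_half_sum (cos (eta *+ 2)) (- cos eps)) mp mm (rp / mp) (rm / mm).
set beta := 2 * (1 + (cos (eta *+ 2))^-1).
have K0 : 0 < K by rewrite det_const_gt0 ?divr_gt0.
have beta0 : 0 < beta * Num.sqrt beta.
  have b0 : 0 < beta by rewrite mulr_gt0 // addr_gt0 ?invr_gt0.
  by rewrite mulr_gt0 ?sqrtr_gt0.
exists (K / (beta * Num.sqrt beta)); split => [|lam xi hlam hxi]; first by rewrite divr_gt0.
have n1 : (0 < n.-1)%N by move: n2; case: (n) => [|[|]].
have [S0 hS hSA] := sum_sqr_bounds eta0 eta4 n1 hxi.
have [lam0 _] := hlam.
have hl := Sigma_Re (ltW eps0) hlam.
apply: le_trans _ (Lmat_det_lower rp0 rm0 mp0 mm0 k1b k2b k12 S0 lam0 hS hl).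
have hcube := sum_cube_le (cmod_ge0 lam) (sqrtr_ge0 _) k1_gt0 hSA.
apply: le_trans (ler_wpM2l (ltW (divr_gt0 K0 beta0)) hcube) _.
by rewrite -/beta [leLHS]mulrA divfK ?gt_eqF.
Qed.
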